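(* Let $\rho=0.4353184958$, $\tau=0.1230440086$, $\varepsilon=2\times 10^{-10}$ and $U=\{q\in\mathbb{C}:\ \mathrm{Re}\,q\in[\rho-\varepsilon,\rho+\varepsilon],\ \mathrm{Im}\,q\in[\tau-\varepsilon,\tau+\varepsilon]\}$. Let $5\leq n\leq\infty$ and let $r=(r_5,r_6,\ldots)$ (indices $5\leq j\leq n$) with each $r_j\in[0,1]$, and define $$\theta_r(q,z)=1+qz+q^3z^2+q^6z^3+q^{10}z^4+\sum_{j=5}^{n}r_jq^{j(j+1)/2}z^j.$$ Then for every $q\in U$ and every $z\in\mathbb{C}$ with $|z|=|q|^{-2}$ one has $\theta_r(q,z)\neq 0$.
   Context: Here $\rho,\tau$ are the given rational (finite decimal) numbers. *)

From Stdlib Require Import Reals.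
From Coquelicot Require Import Coquelicot.
Open Scope R_scope.

Definition rho : R := 4353184958 / 10000000000.
Definition tau : R := 1230440086 / 10000000000.
Definition eps : R := 2 / 10000000000.

Definition inU (q : C) : Prop :=
  rho - eps <= Re q <= rho + eps /\ tau - eps <= Im q <= tau + eps.

Fixpoint cpow (x : C) (k : nat) : C :=
  match k with O => RtoC 1 | S k' => Cmult x (cpow x k') end.

Definition term (r : nat -> R) (q z : C) (j : nat) : C :=
  Cmult (RtoC (r j)) (Cmult (cpow q (Nat.div (j * (j + 1)) 2)) (cpow z j)).

Definition theta_head (q z : C) : C :=
  Cplus (RtoC 1) (Cplus (Cmult q z) (Cplus (Cmult (cpow q 3) (cpow z 2))
    (Cplus (Cmult (cpow q 6) (cpow z 3)) (Cmult (cpow q 10) (cpow z 4))))).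

Fixpoint tail_sum (r : nat -> R) (q z : C) (n : nat) : C :=
  match n with
  | O => RtoC 0
  | S m => Cplus (tail_sum r q z m) (if Nat.leb 5 n then term r q z n else RtoC 0)
  end.

Definition theta_fin (n : nat) (r : nat -> R) (q z : C) : C :=
  Cplus (theta_head q z) (tail_sum r q z n).

(* infinite tail: coefficients of the series sum_{j>=5} r_j q^{T_j} z^j *)
Definition tail_term (r : nat -> R) (q z : C) (j : nat) : C :=
  if Nat.leb 5 j then term r q z j else RtoC 0.

From Stdlib Require Import Reals Lra Psatz Lia.
From Coquelicot Require Import Coquelicot.
Open Scope R_scope.

(* Put v = q^2 z, so that |v| = 1 and q theta_head(q, z) = g(q, v) with
   g(q, v) = q + v + v^2 + q v^3 + q^3 v^4.  At the rational point q0 = 0.435 + 0.123 i,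
   within 1/2000 of all of U, |g(q0, v)| >= 1/20 on the unit circle: after the substitution
   v = (1 + i t) / (1 - i t) this is a polynomial inequality in t, certified by a sum of
   squares.  Moving q from q0 to U changes g by at most 3 |q - q0| <= 3/2000.  For j >= 5,
   j(j+1)/2 >= 3j, so the j-th tail term has modulus at most |q|^j and the tail at most
   |q|^5 / (1 - |q|) < 1/25; then |q| times the tail stays below 1/20 - 3/2000. *)

Lemma Cmod_cpow (x : C) (k : nat) : Cmod (cpow x k) = Cmod x ^ k.
Proof. exact (Cmod_pow x k). Qed.

Lemma Cmod_le_of_sqr (z : C) (k : R) :
  0 <= k -> Re z ^ 2 + Im z ^ 2 <= k ^ 2 -> Cmod z <= k.
Proof. rewrite <- Cmod2_alt. pose proof (Cmod_ge_0 z). nra. Qed.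

Lemma Cmod_ge_of_sqr (z : C) (k : R) :
  0 <= k -> k ^ 2 <= Re z ^ 2 + Im z ^ 2 -> k <= Cmod z.
Proof. rewrite <- Cmod2_alt. pose proof (Cmod_ge_0 z). nra. Qed.

Lemma Rle_pow_le1 (x : R) (m n : nat) :
  0 <= x <= 1 -> (m <= n)%nat -> x ^ n <= x ^ m.
Proof.
  intros Hx Hmn. replace n with (m + (n - m))%nat by lia. rewrite pow_add.
  pose proof (pow_incr x 1 (n - m) Hx) as Hle. rewrite pow1 in Hle.
  pose proof (pow_le x m (proj1 Hx)). nra.
Qed.

Definition scaled_head (q v : C) : C :=
  (q + v + v ^ 2 + q * v ^ 3 + q ^ 3 * v ^ 4)%C.

Lemma Cmult_theta_head (q z : C) :
  (q * theta_head q z = scaled_head q (q ^ 2 * z))%C.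
Proof. unfold theta_head, scaled_head. cbn [cpow Cpow]. ring. Qed.

Definition homog_head (q u w : C) : C :=
  (q * u ^ 4 + w * u ^ 3 + w ^ 2 * u ^ 2 + q * w ^ 3 * u + q ^ 3 * w ^ 4)%C.

Lemma scaled_head_homog (q v u w : C) :
  (v * u = w)%C -> (scaled_head q v * u ^ 4 = homog_head q u w)%C.
Proof. intros <-. unfold scaled_head, homog_head. cbn [Cpow]. ring. Qed.

Lemma unit_circle_cayley (v : C) :
  Cmod v = 1 -> v <> (- 1)%C -> exists t : R, Cmult v (1, - t) = (1, t).
Proof.
  destruct v as [c s]. intros Hv Hneq.
  assert (Hcs : c ^ 2 + s ^ 2 = 1).
  { pose proof (Cmod2_alt (c, s)) as E. rewrite Hv in E. simpl in E |- *. lra. }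
  assert (Hc : 0 < 1 + c).
  { destruct (Req_dec c (-1)) as [->|Hc]; [|nra].
    exfalso. apply Hneq. assert (s = 0) as -> by nra.
    unfold Copp, RtoC. simpl. f_equal; ring. }
  exists (s / (1 + c)).
  unfold Cmult. simpl. f_equal; field_simplify_eq; lra.
Qed.

Definition q0 : C := (435 / 1000, 123 / 1000).

Definition cayley_re (t : R) : R :=
  293256953/100000000 - 3231579/125000000 * t - 49270859/50000000 * t ^ 2
  - 58268421/125000000 * t ^ 3 + 6256953/100000000 * t ^ 4.

Definition cayley_im (t : R) : R :=
  156981579/500000000 - 65493047/25000000 * t - 286444737/250000000 * t ^ 2
  + 8993047/25000000 * t ^ 3 + 33981579/500000000 * t ^ 4.

Lemma homog_head_q0_cayley (t : R) :
  homog_head q0 (1, - t) (1, t) = (cayley_re t, cayley_im t).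
Proof.
  unfold homog_head, q0, cayley_re, cayley_im. cbn [Cpow].
  unfold Cplus, Cmult, RtoC. cbn [fst snd]. f_equal; field.
Qed.

Lemma cayley_sos (t : R) :
  / 400 * (1 + t ^ 2) ^ 4 <= cayley_re t ^ 2 + cayley_im t ^ 2.
Proof.
  (* The two long squares come from a numerical sum-of-squares decomposition; lra then
     finds nonnegative multipliers for the listed squares summing to the difference. *)
  pose proof (pow2_ge_0 (7359/2500 - 967/10000 * t - 20501/10000 * t ^ 2
                         - 701/10000 * t ^ 3 + 673/10000 * t ^ 4)).
  pose proof (pow2_ge_0 (-1731/10000 + 17729/5000 * t + 2373/5000 * t ^ 2
                         - 2841/5000 * t ^ 3)).
  pose proof (pow2_ge_0 (t ^ 2 + t ^ 3)). pose proof (pow2_ge_0 (t ^ 3 - t ^ 4)).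
  pose proof (pow2_ge_0 t). pose proof (pow2_ge_0 (t ^ 2)).
  pose proof (pow2_ge_0 (t ^ 3)). pose proof (pow2_ge_0 (t ^ 4)).
  unfold cayley_re, cayley_im. lra.
Qed.

Lemma scaled_head_q0_ge (v : C) : Cmod v = 1 -> / 20 <= Cmod (scaled_head q0 v).
Proof.
  intros Hv.
  destruct (Ceq_dec v (- 1)%C) as [->|Hneq].
  { apply Cmod_ge_of_sqr; [lra|]. unfold scaled_head, q0. cbn [Cpow].
    unfold Cplus, Cmult, Copp, RtoC. simpl. lra. }
  destruct (unit_circle_cayley v Hv Hneq) as [t Ht].
  pose proof (f_equal Cmod (scaled_head_homog q0 v _ _ Ht)) as E.
  rewrite homog_head_q0_cayley, Cmod_mult, Cmod_pow in E.
  assert (Hu : Cmod (1, - t) ^ 2 = 1 + t ^ 2).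
  { rewrite Cmod2_alt. simpl. ring. }
  pose proof (cayley_sos t) as S.
  assert (Hc : Cmod (cayley_re t, cayley_im t) ^ 2 = cayley_re t ^ 2 + cayley_im t ^ 2)
    by apply Cmod2_alt.
  rewrite <- Hc, <- E in S.
  replace ((Cmod (scaled_head q0 v) * Cmod (1, - t) ^ 4) ^ 2)
    with (Cmod (scaled_head q0 v) ^ 2 * (Cmod (1, - t) ^ 2) ^ 4) in S by ring.
  rewrite Hu in S.
  assert (Hg : / 400 <= Cmod (scaled_head q0 v) ^ 2).
  { apply Rmult_le_reg_r with ((1 + t ^ 2) ^ 4); [apply pow_lt; nra | lra]. }
  pose proof (Cmod_ge_0 (scaled_head q0 v)). nra.
Qed.

Lemma scaled_head_lipschitz (q q' v : C) :
  Cmod v = 1 -> Cmod q <= 1 / 2 -> Cmod q' <= 1 / 2 ->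
  Cmod (scaled_head q v - scaled_head q' v) <= 3 * Cmod (q - q').
Proof.
  intros Hv Hq Hq'.
  assert (E : (scaled_head q v - scaled_head q' v =
               (q - q') * (1 + v ^ 3 + (q * q + q * q' + q' * q') * v ^ 4))%C).
  { unfold scaled_head. cbn [Cpow]. ring. }
  assert (Hquad : Cmod (q * q + q * q' + q' * q') <= 3 / 4).
  { eapply Rle_trans; [apply Cmod_triangle|].
    eapply Rle_trans; [apply Rplus_le_compat_r, Cmod_triangle|].
    rewrite !Cmod_mult. pose proof (Cmod_ge_0 q). pose proof (Cmod_ge_0 q'). nra. }
  assert (Hfac : Cmod (1 + v ^ 3 + (q * q + q * q' + q' * q') * v ^ 4) <= 3).
  { eapply Rle_trans; [apply Cmod_triangle|].
    eapply Rle_trans; [apply Rplus_le_compat_r, Cmod_triangle|].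
    rewrite Cmod_mult, !Cmod_pow, Cmod_1, Hv. simpl. lra. }
  rewrite E, Cmod_mult. pose proof (Cmod_ge_0 (q - q')). nra.
Qed.

Lemma inU_near_q0 (q : C) : inU q -> Cmod (q - q0) <= / 2000.
Proof.
  destruct q as [a b]. unfold inU, q0, rho, tau, eps. simpl. intros [[? ?] [? ?]].
  apply Cmod_le_of_sqr; simpl; nra.
Qed.

Lemma inU_Cmod_bounds (q : C) : inU q -> 45 / 100 <= Cmod q <= 46 / 100.
Proof.
  destruct q as [a b]. unfold inU, rho, tau, eps. simpl. intros [[? ?] [? ?]].
  split; [apply Cmod_ge_of_sqr | apply Cmod_le_of_sqr]; simpl; nra.
Qed.

Lemma Cmod_q0_le : Cmod q0 <= 1 / 2.
Proof. apply Cmod_le_of_sqr; unfold q0; simpl; lra. Qed.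

Lemma theta_head_add_small_neq0 (q z T : C) :
  inU q -> Cmod z = / Cmod q ^ 2 -> Cmod T <= / 25 -> Cplus (theta_head q z) T <> 0.
Proof.
  intros HU Hz HT E.
  pose proof (inU_Cmod_bounds q HU) as Hq.
  set (v := (q ^ 2 * z)%C).
  assert (Hv : Cmod v = 1).
  { unfold v. rewrite Cmod_mult, Cmod_pow, Hz. field. lra. }
  assert (Hg : scaled_head q v = (- (q * T))%C).
  { unfold v. rewrite <- Cmult_theta_head.
    replace (theta_head q z) with (Cplus (theta_head q z) T - T)%C by ring.
    rewrite E. ring. }
  assert (Hmove : Cmod (scaled_head q v - scaled_head q0 v) <= 3 / 2000).
  { pose proof (inU_near_q0 q HU). pose proof Cmod_q0_le.
    eapply Rle_trans; [apply scaled_head_lipschitz; auto; lra | lra]. }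
  assert (Htri : Cmod (scaled_head q0 v)
                 <= Cmod (scaled_head q v) + Cmod (scaled_head q v - scaled_head q0 v)).
  { replace (scaled_head q0 v)
      with (scaled_head q v - (scaled_head q v - scaled_head q0 v))%C at 1 by ring.
    rewrite <- (Cmod_opp (scaled_head q v - scaled_head q0 v)). apply Cmod_triangle. }
  pose proof (scaled_head_q0_ge v Hv).
  assert (Cmod (scaled_head q v) = Cmod q * Cmod T)
    by now rewrite Hg, Cmod_opp, Cmod_mult.
  pose proof (Cmod_ge_0 T). nra.
Qed.

Lemma triangular_ge_3j (j : nat) : (5 <= j)%nat -> (3 * j <= j * (j + 1) / 2)%nat.
Proof. intros. apply Nat.div_le_lower_bound; nia. Qed.

Lemma Cmod_term_le (r : nat -> R) (q z : C) (j : nat) :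
  (5 <= j)%nat -> 0 <= r j <= 1 -> 0 < Cmod q <= 1 -> Cmod z = / Cmod q ^ 2 ->
  Cmod (term r q z j) <= Cmod q ^ j.
Proof.
  intros Hj Hr Hq Hz. unfold term.
  rewrite !Cmod_mult, Cmod_R, !Cmod_cpow, Hz, Rabs_pos_eq by lra.
  set (x := Cmod q) in *.
  assert (Hinv : 0 <= (/ x ^ 2) ^ j)
    by (apply pow_le, Rlt_le, Rinv_0_lt_compat, pow_lt; lra).
  assert (Hpow : x ^ (j * (j + 1) / 2) * (/ x ^ 2) ^ j <= x ^ j).
  { replace (x ^ j) with (x ^ (3 * j) * (/ x ^ 2) ^ j)
      by (rewrite pow_mult, <- Rpow_mult_distr; f_equal; field; lra).
    apply Rmult_le_compat_r; [exact Hinv|].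
    apply Rle_pow_le1; [lra | now apply triangular_ge_3j]. }
  pose proof (pow_le x (j * (j + 1) / 2) ltac:(lra)).
  assert (0 <= x ^ (j * (j + 1) / 2) * (/ x ^ 2) ^ j) by (apply Rmult_le_pos; auto).
  nra.
Qed.

Lemma Cmod_tail_term_le (r : nat -> R) (q z : C) (j : nat) :
  ((5 <= j)%nat -> 0 <= r j <= 1) -> 0 < Cmod q <= 1 -> Cmod z = / Cmod q ^ 2 ->
  Cmod (tail_term r q z j) <= Cmod q ^ j.
Proof.
  intros Hr Hq Hz. unfold tail_term.
  destruct (Nat.leb_spec 5 j).
  - apply Cmod_term_le; auto.
  - rewrite Cmod_0. apply pow_le. lra.
Qed.

Lemma Cmod_sum_n_le_geom (a : nat -> C) (m n : nat) (x : R) :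
  0 <= x < 1 -> (forall j, (j < m)%nat -> a j = 0) ->
  (forall j, (j <= n)%nat -> Cmod (a j) <= x ^ j) ->
  Cmod (sum_n a n) <= x ^ m / (1 - x).
Proof.
  intros Hx Hzero Ha.
  assert (Hk : forall k, (k <= n)%nat ->
            Cmod (sum_n a k) * (1 - x) <= x ^ m - x ^ Nat.max (S k) m).
  { induction k as [|k IH]; intros Hkn.
    - rewrite sum_O. destruct m as [|m].
      + simpl. pose proof (Ha 0%nat (Nat.le_0_l n)). simpl in *. nra.
      + rewrite Hzero, Cmod_0 by lia. rewrite Nat.max_r by lia. lra.
    - rewrite sum_Sn.
      eapply Rle_trans; [apply Rmult_le_compat_r; [lra | apply Cmod_triangle]|].
      specialize (IH ltac:(lia)).
      destruct (Nat.lt_ge_cases (S k) m).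
      + rewrite Hzero, Cmod_0 by lia. rewrite !Nat.max_r in * by lia. lra.
      + pose proof (Ha (S k) Hkn).
        rewrite Nat.max_l in IH by lia. rewrite Nat.max_l by lia.
        change (x ^ S (S k)) with (x * x ^ S k). nra. }
  apply Rmult_le_reg_r with (1 - x); [lra|].
  unfold Rdiv. rewrite Rmult_assoc, Rinv_l by lra.
  specialize (Hk n (Nat.le_refl n)). pose proof (pow_le x (Nat.max (S n) m) (proj1 Hx)). lra.
Qed.

Lemma sum_n_tail_term (r : nat -> R) (q z : C) (n : nat) :
  sum_n (tail_term r q z) n = tail_sum r q z n.
Proof.
  induction n as [|n IH].
  - now rewrite sum_O.
  - now rewrite sum_Sn, IH.
Qed.

Lemma Cmod_tail_sum_le (n : nat) (r : nat -> R) (q z : C) :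
  (forall j, (5 <= j <= n)%nat -> 0 <= r j <= 1) -> inU q -> Cmod z = / Cmod q ^ 2 ->
  Cmod (tail_sum r q z n) <= / 25.
Proof.
  intros Hr HU Hz.
  pose proof (inU_Cmod_bounds q HU) as Hq.
  rewrite <- sum_n_tail_term.
  eapply Rle_trans; [apply Cmod_sum_n_le_geom with (m := 5%nat) (x := Cmod q)|].
  - lra.
  - intros j Hj. unfold tail_term. destruct (Nat.leb_spec 5 j); [lia | reflexivity].
  - intros j Hj. apply Cmod_tail_term_le; [intros; apply Hr; lia | lra | exact Hz].
  - apply Rmult_le_reg_r with (1 - Cmod q); [lra|].
    unfold Rdiv. rewrite Rmult_assoc, Rinv_l by lra.
    pose proof (pow_incr (Cmod q) (46 / 100) 5 ltac:(lra)). lra.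
Qed.

Lemma is_series_Cmod_le (a : nat -> C) (l : C) (B : R) :
  is_series a l -> (forall n, Cmod (sum_n a n) <= B) -> Cmod l <= B.
Proof.
  intros Hl HB.
  assert (Hlim : is_lim_seq (fun n => Cmod (sum_n a n)) (Cmod l)).
  { eapply filterlim_comp; [exact Hl | exact (@filterlim_norm C_AbsRing C_NormedModule l)]. }
  apply (is_lim_seq_le _ _ _ _ HB Hlim (is_lim_seq_const B)).
Qed.

Lemma ex_series_tail_term (r : nat -> R) (q z : C) :
  (forall j, (5 <= j)%nat -> 0 <= r j <= 1) -> 0 < Cmod q < 1 -> Cmod z = / Cmod q ^ 2 ->
  ex_series (V := C_CompleteNormedModule) (tail_term r q z).
Proof.
  intros Hr Hq Hz.
  apply (ex_series_le _ (fun j => Cmod q ^ j)).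
  - intros j. apply Cmod_tail_term_le; [apply Hr | lra | exact Hz].
  - exists (/ (1 - Cmod q)). apply is_series_geom. rewrite Rabs_pos_eq; lra.
Qed.

Theorem lemma4 :
  (* case 5 <= n < oo *)
  (forall (n : nat) (r : nat -> R), (5 <= n)%nat ->
     (forall j : nat, (5 <= j <= n)%nat -> 0 <= r j <= 1) ->
     forall q z : C, inU q -> Cmod z = / (Cmod q ^ 2) ->
     theta_fin n r q z <> RtoC 0) /\
  (* case n = oo: the series converges and its sum is nonzero *)
  (forall (r : nat -> R),
     (forall j : nat, (5 <= j)%nat -> 0 <= r j <= 1) ->
     forall q z : C, inU q -> Cmod z = / (Cmod q ^ 2) ->
     exists l : C, @is_series C_AbsRing C_NormedModule (tail_term r q z) l /\
                   Cplus (theta_head q z) l <> RtoC 0).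
Proof.
  split.
  - intros n r _ Hr q z HU Hz.
    apply theta_head_add_small_neq0; auto.
    now apply Cmod_tail_sum_le.
  - intros r Hr q z HU Hz.
    pose proof (inU_Cmod_bounds q HU) as Hq.
    destruct (ex_series_tail_term r q z Hr ltac:(lra) Hz) as [l Hl].
    exists l. split; [exact Hl|].
    apply theta_head_add_small_neq0; auto.
    apply (is_series_Cmod_le _ _ _ Hl). intros n.
    rewrite sum_n_tail_term. apply Cmod_tail_sum_le; auto.
    intros j Hj. apply Hr; lia.
Qed.
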